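(* Assume $\langle f\rangle_X=0$, $N/p\in\mathbb N$, and that $\psi$ satisfies (A1) and (A2). Then there exist constants $C_1,C_2$, depending only on $c_\psi,C_\psi,C'_\psi$ and $p$ (in particular independent of $\epsilon$ and $f$), such that \[ |u^{\rm c}-u|_{H^1}\le \epsilon\, C_1\|f\|_{L^2},\qquad |\langle u^{\rm c}\rangle_X|\le \epsilon^2 C_2\|f\|_{L^2}, \] where $u$ is the solution of the atomistic problem, $u^0$ the solution of the homogenized problem, and $u^{\rm c}$ the corrector.
   Context: Let $\epsilon>0$ and $N,p$ be positive integers, with the normalization $N\epsilon=1$. Set $X_i=\epsilon i$ ($i\in\mathbb Z$) and $Y_j=j$ ($j\in\mathbb Z$). $U^N_{\rm per}(\epsilon\mathbb Z)$ is the space of functions $u:\epsilon\mathbb Z\to\mathbb R$ with $u(X_{i+N})=u(X_i)$ for all $i$, and $U^N_\#(\epsilon\mathbb Z)$ is the subspace with $\langle u\rangle_X:=\frac1N\sum_{i=1}^N u(X_i)=0$. For $u,v\in U^N_{\rm per}(\epsilon\mathbb Z)$: $\langle u,v\rangle_X=\frac1N\sum_{i=1}^N u(X_i)v(X_i)$, $Du(X_i)=(u(X_{i+1})-u(X_i))/\epsilon$, $\|u\|_{L^q}=(\frac1N\sum_{i=1}^N|u(X_i)|^q)^{1/q}$, $|u|_{H^1}=\|Du\|_{L^2}$. A two-scale function is $g:\epsilon\mathbb Z\times\mathbb Z\to\mathbb R$ with $g(X_{i+N},Y_j)=g(X_i,Y_j)=g(X_i,Y_{j+p})$; set $D_Xg(X_i,Y_j)=(g(X_{i+1},Y_j)-g(X_i,Y_j))/\epsilon$,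 $D_Yg(X_i,Y_j)=g(X_i,Y_{j+1})-g(X_i,Y_j)$, $\langle g\rangle_Y(X_i)=\frac1p\sum_{j=1}^p g(X_i,Y_j)$, $\|g\|_{L^\infty(N,p)}=\max_{1\le i\le N,1\le j\le p}|g(X_i,Y_j)|$. $\psi$ is a two-scale function satisfying (A1) $0<c_\psi\le\psi(X_i,Y_j)\le C_\psi$ for all $i,j$, and (A2) $\|D_X\psi\|_{L^\infty(N,p)}\le C'_\psi$. Define $\psi^\epsilon(X_i)=\psi(X_i,X_i/\epsilon)$ and the homogenized tensor $\psi^0(X_i)=\langle 1/\psi(X_i,\cdot)\rangle_Y^{-1}$. The cell solution $\chi$ is the two-scale function with $\langle\chi(X_i,\cdot)\rangle_Y=0$ for all $i$ and $-D_Y(\psi D_Y\chi)=D_Y\psi$ at every $(X_i,Y_j)$. $f\in U^N_{\rm per}(\epsilon\mathbb Z)$. The atomistic problem: $u\in U^N_\#(\epsilon\mathbb Z)$ with $\langle\psi^\epsilon Du,Dv\rangle_X=\langle f,v\rangle_X$ for all $v\in U^N_{\rm per}(\epsilon\mathbb Z)$. The homogenized problem: $u^0\in U^N_\#(\epsilon\mathbb Z)$ with $\langle\psi^0Du^0,Dv\rangle_X=\langle f,v\rangle_X$ for all $v\in U^N_{\rm per}(\epsilon\mathbb Z)$. The corrector is $u^{\rm c}(X_i)=u^0(X_i)+\epsilon\,\chi(X_i,X_i/\epsilon)\,Du^0(X_i)$. *)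

From mathcomp Require Import all_boot all_order all_algebra.
From mathcomp Require Import reals.
Set Implicit Arguments. Unset Strict Implicit. Unset Printing Implicit Defensive.
Import Order.TTheory GRing.Theory Num.Theory.
Local Open Scope ring_scope.

(* Functions on the lattice eps*Z are represented by their values at the
   index i : int, i.e.  u i  stands for u(X_i) with X_i = eps*i.
   Two-scale functions g : int -> int -> R, g i j stands for g(X_i, Y_j),
   Y_j = j. *)

Section Defs.
Context {R : realType}.

Definition eps (N : nat) : R := (N%:R)^-1.

Definition periodic (N : nat) (u : int -> R) : Prop :=
  forall i : int, u (i + N%:Z) = u i.

Definition two_scale (N p : nat) (g : int -> int -> R) : Prop :=
  forall i j : int, g (i + N%:Z) j = g i j /\ g i (j + p%:Z) = g i j.

Definition avgX (N : nat) (u : int -> R) : R :=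
  (N%:R)^-1 * \sum_(1 <= i < N.+1) u (i%:Z).

Definition innerX (N : nat) (u v : int -> R) : R :=
  avgX N (fun i => u i * v i).

Definition D (N : nat) (u : int -> R) : int -> R :=
  fun i => (u (i + 1) - u i) / eps N.

Definition L2norm (N : nat) (u : int -> R) : R :=
  Num.sqrt (avgX N (fun i => u i ^+ 2)).

Definition H1semi (N : nat) (u : int -> R) : R := L2norm N (D N u).

Definition DX (N : nat) (g : int -> int -> R) : int -> int -> R :=
  fun i j => (g (i + 1) j - g i j) / eps N.

Definition DY (g : int -> int -> R) : int -> int -> R :=
  fun i j => g i (j + 1) - g i j.

Definition avgY (p : nat) (h : int -> R) : R :=
  (p%:R)^-1 * \sum_(1 <= j < p.+1) h (j%:Z).

Definition Linf_norm (N p : nat) (g : int -> int -> R) : R :=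
  \big[Num.max/0]_(1 <= i < N.+1) \big[Num.max/0]_(1 <= j < p.+1)
     `|g (i%:Z) (j%:Z)|.

(* psi^eps(X_i) = psi(X_i, X_i/eps) = psi(X_i, Y_i) *)
Definition osc (g : int -> int -> R) : int -> R := fun i => g i i.

Definition psi0 (p : nat) (psi : int -> int -> R) : int -> R :=
  fun i => (avgY p (fun j => (psi i j)^-1))^-1.

Definition A1 (psi : int -> int -> R) (c C : R) : Prop :=
  0 < c /\ forall i j : int, c <= psi i j /\ psi i j <= C.

Definition A2 (N p : nat) (psi : int -> int -> R) (C' : R) : Prop :=
  Linf_norm N p (DX N psi) <= C'.

Definition cell_solution (N p : nat) (psi chi : int -> int -> R) : Prop :=
  two_scale N p chi /\
  (forall i : int, avgY p (chi i) = 0) /\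
  (forall i j : int,
     - DY (fun a b => psi a b * DY chi a b) i j = DY psi i j).

Definition weak_solution (N : nat) (a f u : int -> R) : Prop :=
  periodic N u /\ avgX N u = 0 /\
  forall v : int -> R, periodic N v ->
    innerX N (fun i => a i * D N u i) (D N v) = innerX N f v.

Definition corrector (N : nat) (chi : int -> int -> R) (u0 : int -> R)
  : int -> R :=
  fun i => u0 i + eps N * chi i i * D N u0 i.

End Defs.

(* Both discrete fluxes, psi^eps Du and psi^0 Du^0, satisfy the conservation law
   sigma(X_{i-1}) - sigma(X_i) = eps f(X_i), so they differ by a constant delta; and since
   Du^0 = psi^0 Du^0 / psi^0 has zero mean, |psi^0 Du^0| is at most its variation over a
   period, ||f||_{L^1}.  The cell problem integrates in closed form, psi (1 + D_Y chi) = psi^0,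
   so chi is bounded and O(eps)-Lipschitz in X.  Since p divides N, diagonal sums of two-scale
   functions split into whole periods in Y, and the rows of psi^0/psi - 1 and of chi sum to zero
   over a period; this gives delta = O(eps ||f||) from <Du> = 0, and
   <u^c> = eps^2 <chi Du^0> = O(eps^2 ||f||).  Finally D(u^c - u) is the X-increment of
   chi Du^0 minus delta / psi^eps, which is pointwise O(eps (||f|| + |f|)). *)

From mathcomp Require Import all_boot all_order all_algebra.
From mathcomp Require Import reals.
From mathcomp Require Import ring lra zify.
Import Order.TTheory GRing.Theory Num.Theory.
Set Implicit Arguments. Unset Strict Implicit. Unset Printing Implicit Defensive.
Local Open Scope ring_scope.

Lemma shift1_invariant_const (T : Type) (g : int -> T) :
  (forall k, g (k + 1) = g k) -> forall k, g k = g 0.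
Proof.
move=> gS.
have gn (n : nat) : g n%:Z = g 0 /\ g (- n%:Z) = g 0.
  elim: n => [|n [IHp IHn]]; first by rewrite oppr0.
  split; [rewrite -IHp -(gS n%:Z) | rewrite -IHn -(gS (- n.+1%:Z))]; congr g; lia.
by case=> n; [case: (gn n) | case: (gn n.+1) => _ <-; rewrite NegzE].
Qed.

Lemma big_nat_blocks (V : nmodType) (p m : nat) (g : nat -> V) :
  \sum_(1 <= i < (m * p).+1) g i = \sum_(l < m) \sum_(k < p) g (l * p + k).+1.
Proof.
elim: m => [|m IHm]; first by rewrite big_ord0 big_geq.
rewrite big_ord_recr /= -IHm (big_cat_nat _ (n := (m * p).+1)) //; last by lia.
congr (_ + _); rewrite -(add1n (m * p)) big_addn big_add1 /=.
have -> : ((m.+1 * p).+1 - m * p).-1 = p by lia.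
by rewrite big_mkord; apply: eq_bigr => k _; congr g; lia.
Qed.

Lemma ler_sum_ord_widen (V : numDomainType) (d n : nat) (g : nat -> V) :
  (d <= n)%N -> (forall t, 0 <= g t) -> \sum_(t < d) g t <= \sum_(t < n) g t.
Proof.
move=> dn g0; rewrite (big_ord_widen n g dn).
rewrite [X in _ <= X](bigID (fun t : 'I_n => (t < d)%N)) /= lerDl.
by apply: sumr_ge0 => t _.
Qed.

Lemma ler_dist_increments (V : numDomainType) (h b : int -> V) :
  (forall i, `|h (i + 1) - h i| <= b (i + 1)) ->
  forall (a : int) (d : nat), `|h (a + d%:Z) - h a| <= \sum_(t < d) b (a + t.+1%:Z).
Proof.
move=> hb a; elim=> [|d IHd]; first by rewrite addr0 subrr normr0 big_ord0.
rewrite big_ord_recr /= (_ : a + d.+1%:Z = a + d%:Z + 1); last by lia.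
rewrite (_ : h (a + d%:Z + 1) - h a
    = (h (a + d%:Z + 1) - h (a + d%:Z)) + (h (a + d%:Z) - h a)); last by ring.
by apply: le_trans (ler_normD _ _) _; rewrite [X in _ <= X]addrC lerD.
Qed.

Lemma dist_inv_le (F : numFieldType) (c a b : F) : 0 < c -> c <= a -> c <= b ->
  `|a^-1 - b^-1| <= `|b - a| / c ^+ 2.
Proof.
move=> c0 ca cb; have a0 := lt_le_trans c0 ca; have b0 := lt_le_trans c0 cb.
have -> : a^-1 - b^-1 = (b - a) / (a * b) by field; rewrite !gt_eqF.
rewrite normrM normfV (gtr0_norm (mulr_gt0 a0 b0)) ler_wpM2l //.
by rewrite lef_pV2 ?posrE ?exprn_gt0 ?mulr_gt0 // expr2 ler_pM // ltW.
Qed.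

Lemma ler_dist_prod (V : numDomainType) (x : int -> V) (y : int -> int -> V) (X Y : V)
    (dx dy : int -> V) :
  (forall i, `|x i| <= X) -> (forall i j, `|y i j| <= Y) ->
  (forall i, `|x (i + 1) - x i| <= dx (i + 1)) ->
  (forall i j, `|y (i + 1) j - y i j| <= dy (i + 1)) ->
  forall i j, `|x (i + 1) * y (i + 1) j - x i * y i j| <= dx (i + 1) * Y + X * dy (i + 1).
Proof.
move=> xX yY xd yd i j.
have -> : x (i + 1) * y (i + 1) j - x i * y i j
    = (x (i + 1) - x i) * y (i + 1) j + x i * (y (i + 1) j - y i j) by ring.
apply: le_trans (ler_normD _ _) _; rewrite !normrM.
by apply: lerD; apply: ler_pM => //; apply: normr_ge0.
Qed.

Section Periodic.
Variable R : realType.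
Implicit Types (n : nat) (h : int -> R).

Lemma periodic_addMn n h : periodic n h ->
  forall (m : nat) (i : int), h (i + m%:Z * n%:Z) = h i.
Proof.
move=> hP; elim=> [|m IHm] i; first by rewrite mul0r addr0.
by rewrite (_ : i + m.+1%:Z * n%:Z = i + m%:Z * n%:Z + n%:Z) ?hP ?IHm //; lia.
Qed.

Lemma periodic_addMz n h : periodic n h -> forall (m i : int), h (i + m * n%:Z) = h i.
Proof.
move=> hP [m|m] i; first exact: periodic_addMn.
rewrite -(periodic_addMn hP m.+1 (i + Negz m * n%:Z)); congr h; rewrite NegzE; lia.
Qed.

Lemma periodic_repr n h : periodic n h -> (0 < n)%N ->
  forall i, exists2 k : nat, (0 < k <= n)%N & h i = h k%:Z.
Proof.
move=> hP n0 i; rewrite {1}(divz_eq i n%:Z) addrC periodic_addMz //.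
have r0 : 0 <= (i %% n%:Z)%Z by apply: modz_ge0; rewrite eqz_nat -lt0n.
have rn : (i %% n%:Z)%Z < n%:Z by apply: ltz_pmod; rewrite ltz_nat.
case E: `|(i %% n%:Z)%Z|%N => [|k]; rewrite -(gez0_abs r0) E in rn *.
- by exists n; rewrite ?n0 ?leqnn // -[n%:Z]add0r hP.
- by exists k.+1 => //; lia.
Qed.

Lemma sum_periodic_window n h : periodic n h ->
  forall a : int, \sum_(t < n) h (a + t.+1%:Z) = \sum_(1 <= i < n.+1) h i%:Z.
Proof.
move=> hP a; set g := fun b => \sum_(t < n) h (b + t.+1%:Z).
have gS b : g (b + 1) = g b.
  rewrite /g {g}; case: n hP => [|n] hP; first by rewrite !big_ord0.
  rewrite big_ord_recr big_ord_recl /= addrC; congr (_ + _).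
  - by rewrite -(hP (b + 1)); congr h; lia.
  - by apply: eq_bigr => t _; rewrite /bump add1n; congr h; lia.
rewrite -/(g a) (shift1_invariant_const gS a) /g big_add1 /= big_mkord.
by apply: eq_bigr => t _; rewrite add0r.
Qed.

Lemma sum_periodic_shift1 n h : periodic n h ->
  \sum_(1 <= i < n.+1) h (i%:Z + 1) = \sum_(1 <= i < n.+1) h i%:Z.
Proof.
move=> hP; rewrite -(sum_periodic_window hP 1) big_add1 /= big_mkord.
by apply: eq_bigr => t _; congr h; lia.
Qed.

Lemma dist_le_period_sum n h (b : int -> R) : periodic n b -> (forall i, 0 <= b i) ->
  (forall i, `|h (i + 1) - h i| <= b (i + 1)) ->
  forall k l : nat, (0 < k <= n)%N -> (0 < l <= n)%N ->
  `|h k%:Z - h l%:Z| <= \sum_(1 <= i < n.+1) b i%:Z.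
Proof.
move=> bP b0 hb k l; wlog kl : k l / (k <= l)%N.
  move=> W kn ln; case: (leqP k l) => [kl|/ltnW lk]; first exact: W.
  by rewrite distrC; apply: W.
move=> kn ln; rewrite distrC (_ : l%:Z = k%:Z + (l - k)%N%:Z); last by lia.
apply: le_trans (ler_dist_increments hb _ _) _.
rewrite -(sum_periodic_window bP k%:Z).
by apply: (ler_sum_ord_widen (g := fun t => b (k%:Z + t.+1%:Z))) => //; lia.
Qed.

Lemma normr_le_periodic_zero_wsum n (s w b : int -> R) : (0 < n)%N ->
  periodic n s -> periodic n b -> (forall i, 0 < w i) -> (forall i, 0 <= b i) ->
  \sum_(1 <= i < n.+1) s i%:Z * w i%:Z = 0 ->
  (forall i, `|s (i + 1) - s i| <= b (i + 1)) ->
  forall i, `|s i| <= \sum_(1 <= i < n.+1) b i%:Z.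
Proof.
move=> n0 sP bP w0 b0 sw0 sb i; have [k kn ->] := periodic_repr sP n0 i.
set W := \sum_(1 <= j < n.+1) w j%:Z.
have W0 : 0 < W by rewrite /W big_nat_recl // ltr_pwDl // sumr_ge0 // => j _; apply: ltW.
have sW : s k%:Z * W = \sum_(1 <= j < n.+1) (s k%:Z - s j%:Z) * w j%:Z.
  rewrite mulr_sumr -[LHS]subr0 -{2}sw0 -sumrB.
  by apply: eq_bigr => j _; ring.
rewrite -(ler_pM2r W0) -{1}(gtr0_norm W0) -normrM sW /W mulr_sumr.
apply: le_trans (ler_norm_sum _ _ _) _; apply: ler_sum_nat => j /andP[j1 jn].
rewrite normrM (gtr0_norm (w0 _)); apply: ler_wpM2r; first exact: ltW.
by apply: dist_le_period_sum => //; rewrite j1 -ltnS.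
Qed.

End Periodic.

Section AverageY.
Variables (R : realType) (p : nat).
Hypothesis p0 : (0 < p)%N.
Implicit Types (h : int -> R).

Lemma avgY_bounded h (lo hi : R) :
  (forall j, lo <= h j <= hi) -> lo <= avgY p h <= hi.
Proof.
move=> hb; have pR : (0 : R) < p%:R by rewrite ltr0n.
have sum_cst (x : R) : \sum_(1 <= j < p.+1) x = x * p%:R.
  by rewrite sumr_const_nat subSS subn0 mulr_natr.
rewrite /avgY mulrC ler_pdivlMr // ler_pdivrMr // -!sum_cst.
by apply/andP; split; apply: ler_sum_nat => j _; case/andP: (hb j%:Z).
Qed.

Lemma normr_avgY_le h (B : R) : (forall j, `|h j| <= B) -> `|avgY p h| <= B.
Proof.
move=> hB; rewrite ler_norml; apply: avgY_bounded => j; rewrite -ler_norml; exact: hB.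
Qed.

Lemma avgYD h1 h2 : avgY p (fun j => h1 j + h2 j) = avgY p h1 + avgY p h2.
Proof. by rewrite /avgY big_split mulrDr. Qed.

Lemma avgYB h1 h2 : avgY p (fun j => h1 j - h2 j) = avgY p h1 - avgY p h2.
Proof. by rewrite /avgY sumrB mulrBr. Qed.

Lemma avgYZ (k : R) h : avgY p (fun j => k * h j) = k * avgY p h.
Proof. by rewrite /avgY -mulr_sumr mulrCA. Qed.

Lemma avgY_cst (k : R) : avgY p (fun=> k) = k.
Proof.
by rewrite /avgY sumr_const_nat subSS subn0 -[k *+ p]mulr_natr mulrCA mulVf ?mulr1 // pnatr_eq0 -lt0n.
Qed.

Lemma avgY_eq0 h : avgY p h = 0 -> \sum_(1 <= j < p.+1) h j%:Z = 0.
Proof. by move/eqP; rewrite mulf_eq0 invr_eq0 pnatr_eq0 gtn_eqF //= => /eqP. Qed.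

End AverageY.

Section LinfNorm.
Variables (R : realType) (N p : nat).
Implicit Types (g : int -> int -> R).

Lemma two_scale_DX g : two_scale N p g -> two_scale N p (DX N g).
Proof.
move=> gP i j; rewrite /DX.
have [gN gp] := gP i j; have [gN1 gp1] := gP (i + 1) j.
split; last by rewrite gp gp1.
by rewrite gN (_ : i + N%:Z + 1 = i + 1 + N%:Z) ?gN1 //; lia.
Qed.

Lemma normr_le_Linf_norm g : (0 < N)%N -> (0 < p)%N -> two_scale N p g ->
  forall i j, `|g i j| <= Linf_norm N p g.
Proof.
move=> N0 p0 gP i j.
have [k kN ->] : exists2 k : nat, (0 < k <= N)%N & g i j = g k%:Z j.
  by apply: (@periodic_repr _ N (fun a => g a j)) => // a; case: (gP a j).
have [l lp ->] : exists2 l : nat, (0 < l <= p)%N & g k%:Z j = g k%:Z l%:Z.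
  by apply: (@periodic_repr _ p (g k%:Z)) => // b; case: (gP k%:Z b).
apply: (@bigmax_sup_seq _ _ _ _ _ k) => //; first by rewrite mem_index_iota; lia.
by apply: (@bigmax_sup_seq _ _ _ _ _ l) => //; rewrite mem_index_iota; lia.
Qed.

End LinfNorm.

Definition L1norm (R : realType) (N : nat) (u : int -> R) : R := avgX N (fun i => `|u i|).

Section AverageX.
Variables (R : realType) (N : nat).
Hypothesis N0 : (0 < N)%N.
Implicit Types (g h u v f : int -> R).

Lemma eps_gt0 : (0 : R) < eps N.
Proof. by rewrite /eps invr_gt0 ltr0n. Qed.

Lemma eps_mulN : eps N * N%:R = 1 :> R.
Proof. by rewrite /eps mulVf // pnatr_eq0 -lt0n. Qed.

Lemma avgX_le g h : (forall i, g i <= h i) -> avgX N g <= avgX N h.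
Proof.
by move=> gh; rewrite /avgX ler_pM2l ?invr_gt0 ?ltr0n //; apply: ler_sum_nat => i _.
Qed.

Lemma avgXD g h : avgX N (fun i => g i + h i) = avgX N g + avgX N h.
Proof. by rewrite /avgX big_split mulrDr. Qed.

Lemma avgXZ (k : R) g : avgX N (fun i => k * g i) = k * avgX N g.
Proof. by rewrite /avgX -mulr_sumr mulrCA. Qed.

Lemma avgX_cst (k : R) : avgX N (fun=> k) = k.
Proof.
by rewrite /avgX sumr_const_nat subSS subn0 -[k *+ N]mulr_natr mulrCA mulVf ?mulr1 // pnatr_eq0 -lt0n.
Qed.

Lemma avgX_sqr_ge0 g : 0 <= avgX N (fun i => g i ^+ 2).
Proof. by rewrite -(avgX_cst 0); apply: avgX_le => i; apply: sqr_ge0. Qed.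

Lemma L1norm_le_L2norm f : L1norm N f <= L2norm N f.
Proof.
rewrite /L1norm /L2norm; set a := avgX N _; set s := avgX N (fun i => f i ^+ 2).
have s0 : 0 <= s := avgX_sqr_ge0 f.
(* average 2 t |f| <= f^2 + t^2, then take t = ||f||_{L^2} *)
have key (t : R) : 0 < t -> a * (2 * t) <= s + t ^+ 2.
  move=> t0; rewrite mulrC -avgXZ -(avgX_cst (t ^+ 2)) -avgXD; apply: avgX_le => i.
  have := sqr_ge0 (`|f i| - t); rewrite -[f i ^+ 2](real_normK (num_real _)); nra.
set L := Num.sqrt s; have L0 : 0 <= L := sqrtr_ge0 s.
have LL : L ^+ 2 = s by rewrite sqr_sqrtr.
have [Lp|] := ltP 0 L; first by have := key L Lp; rewrite -LL; nra.
move=> L_le0; have L00 : L = 0 by apply/eqP; rewrite eq_le L_le0 L0.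
have s00 : s = 0 by rewrite -LL L00 expr0n.
have [ap|] := ltP 0 a; last by rewrite L00.
by have := key a ap; rewrite s00; nra.
Qed.

Lemma L2norm_le_pointwise f g (A B : R) : periodic N f -> 0 <= A -> 0 <= B ->
  (forall i, `|g i| <= A + B * `|f (i + 1)|) ->
  L2norm N g <= 2 * (A + B * L2norm N f).
Proof.
move=> fP A0 B0 gf; set s := avgX N (fun i => f i ^+ 2).
have s0 : 0 <= s := avgX_sqr_ge0 f.
set L := L2norm N f; have L0 : 0 <= L := sqrtr_ge0 s.
have LL : L ^+ 2 = s by rewrite sqr_sqrtr.
have g2 : avgX N (fun i => g i ^+ 2) <= 2 * A ^+ 2 + 2 * B ^+ 2 * s.
  have -> : s = avgX N (fun i => f (i + 1) ^+ 2).
    rewrite /s /avgX (sum_periodic_shift1 (h := fun i => f i ^+ 2)) // => i.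
    by rewrite /= fP.
  rewrite -avgXZ -(avgX_cst (2 * A ^+ 2)) -avgXD; apply: avgX_le => i.
  have := gf i; have := normr_ge0 (f (i + 1)); have := normr_ge0 (g i).
  rewrite -[g i ^+ 2](real_normK (num_real _)) -[f (i + 1) ^+ 2](real_normK (num_real _)).
  set x := `|g i|; set y := `|f (i + 1)| => x0 y0 xy.
  have : 0 <= (A + B * y - x) * x by apply: mulr_ge0 => //; rewrite subr_ge0.
  have := sqr_ge0 (A - B * y); nra.
rewrite /L2norm -(ger0_norm (x := 2 * (A + B * L))); last by nra.
rewrite -sqrtr_sqr ler_sqrt; last exact: sqr_ge0.
apply: le_trans g2 _; rewrite -LL.
by have := mulr_ge0 (mulr_ge0 A0 B0) L0; nra.
Qed.

Lemma D_periodic u : periodic N u -> periodic N (D N u).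
Proof. by move=> uP i; rewrite /D uP addrAC uP. Qed.

Lemma sum_D_periodic u : periodic N u -> \sum_(1 <= i < N.+1) D N u i%:Z = 0.
Proof. by move=> uP; rewrite /D -mulr_suml sumrB sum_periodic_shift1 // subrr mul0r. Qed.

Lemma sum_mul_D_periodic g v : periodic N g -> periodic N v ->
  \sum_(1 <= i < N.+1) g i%:Z * D N v i%:Z
    = \sum_(1 <= i < N.+1) (g (i%:Z - 1) - g i%:Z) / eps N * v i%:Z.
Proof.
move=> gP vP.
have shift : \sum_(1 <= i < N.+1) g i%:Z * v (i%:Z + 1)
           = \sum_(1 <= i < N.+1) g (i%:Z - 1) * v i%:Z.
  rewrite -(sum_periodic_shift1 (h := fun i => g (i - 1) * v i)).
    by apply: eq_bigr => i _; rewrite addrK.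
  by move=> i /=; rewrite vP addrAC gP.
transitivity ((\sum_(1 <= i < N.+1) g i%:Z * v (i%:Z + 1)
               - \sum_(1 <= i < N.+1) g i%:Z * v i%:Z) / eps N).
  by rewrite -sumrB mulr_suml; apply: eq_bigr => i _; rewrite /D; ring.
by rewrite shift -sumrB mulr_suml; apply: eq_bigr => i _; ring.
Qed.

Lemma periodic_sum_sqr_eq0 g : periodic N g ->
  \sum_(1 <= i < N.+1) g i%:Z ^+ 2 = 0 -> forall i, g i = 0.
Proof.
move=> gP /eqP; rewrite psumr_eq0 => [/allP g0 i|i _]; last exact: sqr_ge0.
have [k kN ->] := periodic_repr gP N0 i.
by apply/eqP; rewrite -sqrf_eq0; apply: g0; rewrite mem_index_iota; lia.
Qed.

Lemma weak_solution_flux a f w : periodic N f -> periodic N a -> weak_solution N a f w ->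
  forall k, a (k + 1) * D N w (k + 1) - a k * D N w k = - (eps N * f (k + 1)).
Proof.
move=> fP aP [wP [_ weak]] k.
pose s i := a i * D N w i.
have sP : periodic N s by move=> i; rewrite /s aP (D_periodic wP).
pose g i := (s (i - 1) - s i) / eps N - f i.
have gP : periodic N g.
  by move=> i; rewrite /g fP sP addrAC sP.
have g_orth v : periodic N v -> \sum_(1 <= i < N.+1) g i%:Z * v i%:Z = 0.
  move=> vP; have := weak v vP; rewrite /innerX /avgX => /mulfI sDv.
  have {sDv} sDv : \sum_(1 <= i < N.+1) s i%:Z * D N v i%:Z = \sum_(1 <= i < N.+1) f i%:Z * v i%:Z.
    by apply: sDv; rewrite invr_eq0 pnatr_eq0 -lt0n.
  rewrite (sum_mul_D_periodic sP vP) in sDv.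
  by rewrite /g; under eq_bigr do rewrite mulrBl; rewrite sumrB sDv subrr.
have g0 : forall i, g i = 0.
  apply: (periodic_sum_sqr_eq0 gP).
  by under eq_bigr do rewrite expr2; exact: g_orth gP.
have := g0 (k + 1); rewrite /g addrK => /eqP; rewrite subr_eq0 => /eqP <-.
by rewrite -/(s k) -/(s (k + 1)); field; rewrite gt_eqF // eps_gt0.
Qed.

End AverageX.

Section TwoScaleSum.
Variable R : realType.

(* Cut the diagonal into blocks of length p; on each block H may be frozen at the block's first
   row up to the accumulated X-increments, and the frozen row sums to zero over a period. *)
Lemma normr_sum_diag_le (n p : nat) (H : int -> int -> R) (b : int -> R) :
  (p %| n)%N -> (forall i, 0 <= b i) ->
  (forall l : nat, \sum_(k < p) H (l * p)%N%:Z ((l * p)%N%:Z + k.+1%:Z) = 0) ->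
  (forall i j, `|H (i + 1) j - H i j| <= b (i + 1)) ->
  `|\sum_(1 <= i < n.+1) H i%:Z i%:Z| <= (\sum_(1 <= i < n.+1) b i%:Z) *+ p.
Proof.
move=> pn b0 Hwin Hb; rewrite -(divnK pn) (big_nat_blocks p _ (fun i => H i%:Z i%:Z)).
rewrite (big_nat_blocks p _ (fun i => b i%:Z)) -sumrMnl.
apply: le_trans (ler_norm_sum _ _ _) _; apply: ler_sum => l _ /=.
set a := (l * p)%N%:Z.
have blockE k : ((l * p + k).+1)%:Z = a + k.+1%:Z by rewrite /a; lia.
under eq_bigr do rewrite blockE; under [X in _ <= X *+ _]eq_bigr do rewrite blockE.
rewrite -[X in `|X|]subr0 -[X in `|_ - X|](Hwin l) -sumrB.
set T := \sum_(t < p) b (a + t.+1%:Z).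
apply: le_trans (ler_norm_sum _ _ _) _.
apply: (@le_trans _ _ (\sum_(k < p) T)); last by rewrite sumr_const card_ord.
apply: ler_sum => k _.
apply: le_trans (@ler_dist_increments _ (fun i => H i (a + k.+1%:Z)) b (fun i => Hb i _) a k.+1) _.
by apply: (ler_sum_ord_widen (g := fun t => b (a + t.+1%:Z))).
Qed.

End TwoScaleSum.

Section Homogenization.
Variables (R : realType) (p : nat) (c C C' : R).
Variables (N : nat) (psi chi : int -> int -> R) (f u u0 : int -> R).
Hypotheses (p_gt0 : (0 < p)%N) (N_gt0 : (0 < N)%N) (p_dvd_N : (p %| N)%N).
Hypotheses (psiP : two_scale N p psi) (psi_A1 : A1 psi c C) (psi_A2 : A2 N p psi C').
Hypothesis chi_cell : cell_solution N p psi chi.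
Hypotheses (fP : periodic N f) (u_sol : weak_solution N (osc psi) f u).
Hypothesis u0_sol : weak_solution N (psi0 p psi) f u0.

Local Notation e := (eps N).
Local Notation ps0 := (psi0 p psi).
Local Notation L1 := (L1norm N f).

Lemma e_gt0 : (0 : R) < e. Proof. exact: eps_gt0. Qed.

Lemma c_gt0 : 0 < c. Proof. by case: psi_A1. Qed.

Lemma psi_ge i j : c <= psi i j. Proof. by case: psi_A1 => _ /(_ i j)[]. Qed.

Lemma psi_le i j : psi i j <= C. Proof. by case: psi_A1 => _ /(_ i j)[]. Qed.

Lemma psi_gt0 i j : 0 < psi i j. Proof. exact: lt_le_trans c_gt0 (psi_ge i j). Qed.

Lemma C_gt0 : 0 < C. Proof. exact: lt_le_trans (psi_gt0 0 0) (psi_le 0 0). Qed.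

Lemma normr_DX_psi_le i j : `|DX N psi i j| <= C'.
Proof. exact: le_trans (normr_le_Linf_norm N_gt0 p_gt0 (two_scale_DX psiP) i j) psi_A2. Qed.

Lemma C'_ge0 : 0 <= C'.
Proof. exact: le_trans (normr_ge0 _) (normr_DX_psi_le 0 0). Qed.

Lemma invc_ge0 : 0 <= c^-1. Proof. by rewrite invr_ge0 ltW // c_gt0. Qed.

Lemma C'_c2_ge0 : 0 <= C' / c ^+ 2.
Proof. by rewrite divr_ge0 ?C'_ge0 // exprn_ge0 // ltW // c_gt0. Qed.

Lemma L1_ge0 : 0 <= L1.
Proof. by rewrite -(avgX_cst N_gt0 0); apply: (avgX_le N_gt0) => i; apply: normr_ge0. Qed.

Lemma invpsi_bounded i j : C^-1 <= (psi i j)^-1 <= c^-1.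
Proof. by rewrite !lef_pV2 ?posrE ?psi_gt0 ?C_gt0 ?c_gt0 ?psi_ge ?psi_le. Qed.

Lemma invpsi0E i : (ps0 i)^-1 = avgY p (fun j => (psi i j)^-1).
Proof. by rewrite /psi0 invrK. Qed.

Lemma invpsi0_bounded i : C^-1 <= (ps0 i)^-1 <= c^-1.
Proof. by rewrite invpsi0E; apply: avgY_bounded => // j; apply: invpsi_bounded. Qed.

Lemma psi0_gt0 i : 0 < ps0 i.
Proof.
rewrite -invr_gt0; case/andP: (invpsi0_bounded i) => + _; apply: lt_le_trans.
by rewrite invr_gt0 C_gt0.
Qed.

Lemma psi0_le i : ps0 i <= C.
Proof.
by case/andP: (invpsi0_bounded i) => + _; rewrite lef_pV2 ?posrE ?psi0_gt0 ?C_gt0.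
Qed.

Lemma dist_psi i j : `|psi (i + 1) j - psi i j| <= e * C'.
Proof.
have := normr_DX_psi_le i j; rewrite /DX normrM normfV (gtr0_norm e_gt0).
by rewrite ler_pdivrMr ?e_gt0 // mulrC.
Qed.

Lemma dist_invpsi i j : `|(psi (i + 1) j)^-1 - (psi i j)^-1| <= e * (C' / c ^+ 2).
Proof.
apply: le_trans (dist_inv_le c_gt0 (psi_ge _ _) (psi_ge _ _)) _.
rewrite distrC mulrA; apply: ler_wpM2r; last exact: dist_psi.
by rewrite invr_ge0 exprn_ge0 // ltW // c_gt0.
Qed.

Lemma dist_invpsi0 i : `|(ps0 (i + 1))^-1 - (ps0 i)^-1| <= e * (C' / c ^+ 2).
Proof. by rewrite !invpsi0E -avgYB; apply: normr_avgY_le => // j; apply: dist_invpsi. Qed.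

Lemma dist_psi0 i : `|ps0 (i + 1) - ps0 i| <= e * (C' / c ^+ 2) * C ^+ 2.
Proof.
have a0 := psi0_gt0 (i + 1); have b0 := psi0_gt0 i.
have -> : ps0 (i + 1) - ps0 i = ((ps0 i)^-1 - (ps0 (i + 1))^-1) * (ps0 (i + 1) * ps0 i).
  by field; rewrite !gt_eqF.
rewrite normrM distrC (gtr0_norm (mulr_gt0 a0 b0)).
apply: ler_pM; [exact: normr_ge0 | exact: ltW (mulr_gt0 a0 b0) | exact: dist_invpsi0 |].
by rewrite expr2; apply: ler_pM; rewrite ?psi0_le ?(ltW a0) ?(ltW b0).
Qed.

Lemma psi_periodic_diag : periodic N (osc psi).
Proof.
move=> i; rewrite /osc; case: (psiP i (i + N%:Z)) => -> _.
have [m ->] := dvdnP p_dvd_N; rewrite PoszM.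
by apply: (@periodic_addMn _ p (psi i)) => j; case: (psiP i j).
Qed.

Lemma psi0_periodic : periodic N ps0.
Proof.
move=> i; rewrite /psi0 /avgY; congr (_ * _)^-1; apply: eq_bigr => j _.
by case: (psiP i j) => ->.
Qed.

Lemma normr_psi0_le i : `|ps0 i| <= C.
Proof. by rewrite ger0_norm ?psi0_le // ltW // psi0_gt0. Qed.

Lemma normr_invpsi_le i j : `|(psi i j)^-1| <= c^-1.
Proof. by rewrite ger0_norm ?invr_ge0 ?(ltW (psi_gt0 i j)) //; case/andP: (invpsi_bounded i j). Qed.

Lemma chi_row_periodic i : periodic p (chi i).
Proof. by case: chi_cell => chiP _ j; case: (chiP i j). Qed.

Lemma chi_row_sum i : \sum_(1 <= j < p.+1) chi i j%:Z = 0.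
Proof. by case: chi_cell => _ [chi0 _]; apply: avgY_eq0 (chi0 i). Qed.

(* The cell equation says that the flux psi (1 + D_Y chi) does not depend on Y; averaging
   1 + D_Y chi = flux / psi over a period identifies the flux with the harmonic mean psi0. *)
Lemma chi_DY i j : chi i (j + 1) - chi i j = ps0 i / psi i j - 1.
Proof.
case: chi_cell => _ [_ cellE].
pose q b := psi i b * (1 + (chi i (b + 1) - chi i b)).
have qE : forall b, q b = q 0.
  by apply: shift1_invariant_const => b; have := cellE i b; rewrite /DY /q; lra.
have avg1 : avgY p (fun b => q 0 * (psi i b)^-1) = 1.
  transitivity (avgY p (fun b => 1 + (chi i (b + 1) - chi i b))).
    rewrite /avgY; congr (_ * _); apply: eq_bigr => b _.
    by rewrite -(qE b) /q mulrAC mulfV ?mul1r // gt_eqF ?psi_gt0.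
  rewrite avgYD avgY_cst // avgYB /avgY (sum_periodic_shift1 (chi_row_periodic i)).
  by rewrite subrr addr0.
have q0E : q 0 = ps0 i.
  move: avg1; rewrite avgYZ -invpsi0E => /(congr1 (fun x => x * ps0 i)).
  by rewrite mul1r -mulrA mulVf ?mulr1 // gt_eqF ?psi0_gt0.
have := qE j; rewrite q0E /q => <-.
by field; rewrite gt_eqF ?psi_gt0.
Qed.

Lemma normr_chi_DY_le i j : `|chi i (j + 1) - chi i j| <= C / c + 1.
Proof.
rewrite chi_DY; apply: le_trans (ler_normB _ _) _; rewrite normr1 lerD2r normrM.
by apply: ler_pM; rewrite ?normr_ge0 ?normr_psi0_le ?normr_invpsi_le.
Qed.

Definition chi_max : R := (C / c + 1) *+ p.

Lemma chi_bounded i j : `|chi i j| <= chi_max.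
Proof.
have K_ge0 : 0 <= C / c + 1 by rewrite addr_ge0 ?divr_ge0 // ltW ?C_gt0 ?c_gt0.
have -> : chi_max = \sum_(1 <= k < p.+1) (C / c + 1) by rewrite sumr_const_nat subSS subn0.
apply: (normr_le_periodic_zero_wsum (w := fun=> 1) (b := fun=> C / c + 1) p_gt0
  (chi_row_periodic i)).
- by [].
- by move=> _; apply: ltr01.
- by [].
- by under eq_bigr do rewrite mulr1; apply: chi_row_sum.
- exact: normr_chi_DY_le.
Qed.

Lemma chi_max_ge0 : 0 <= chi_max.
Proof. exact: le_trans (normr_ge0 _) (chi_bounded 0 0). Qed.

Definition chi_lip : R := (C' / c ^+ 2 * C ^+ 2 * c^-1 + C * (C' / c ^+ 2)) *+ p.

Lemma dist_chi i j : `|chi (i + 1) j - chi i j| <= e * chi_lip.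
Proof.
set K := C' / c ^+ 2 * C ^+ 2 * c^-1 + C * (C' / c ^+ 2).
have C_ge0 := ltW C_gt0.
have K_ge0 : 0 <= K := addr_ge0 (mulr_ge0 (mulr_ge0 C'_c2_ge0 (exprn_ge0 2 C_ge0)) invc_ge0)
  (mulr_ge0 C_ge0 C'_c2_ge0).
have -> : e * chi_lip = \sum_(1 <= k < p.+1) e * K.
  by rewrite sumr_const_nat subSS subn0 /chi_lip mulrnAr.
apply: (normr_le_periodic_zero_wsum (s := fun b => chi (i + 1) b - chi i b)
  (w := fun=> 1) (b := fun=> e * K) p_gt0).
- by move=> b; rewrite /= !chi_row_periodic.
- by [].
- by move=> _; apply: ltr01.
- by move=> _; rewrite mulr_ge0 // ltW // e_gt0.
- by under eq_bigr do rewrite mulr1; rewrite sumrB !chi_row_sum subrr.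
move=> b; rewrite (_ : _ - _ = (ps0 (i + 1) * (psi (i + 1) b)^-1 - ps0 i * (psi i b)^-1)).
  apply: le_trans (ler_dist_prod (y := fun i j => (psi i j)^-1)
    (dx := fun=> e * (C' / c ^+ 2) * C ^+ 2) (dy := fun=> e * (C' / c ^+ 2))
    normr_psi0_le normr_invpsi_le dist_psi0 dist_invpsi i b) _.
  by rewrite /K; lra.
by have := chi_DY (i + 1) b; have := chi_DY i b; lra.
Qed.

Lemma L1normE : L1 = \sum_(1 <= i < N.+1) e * `|f i%:Z|.
Proof. by rewrite /L1norm /avgX mulr_sumr. Qed.

Lemma sum_eps_affine (a b : R) :
  \sum_(1 <= i < N.+1) e * (a + b * `|f i%:Z|) = a + b * L1.
Proof.
under eq_bigr do rewrite mulrDr.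
rewrite big_split /= L1normE mulr_sumr sumr_const_nat subSS subn0.
rewrite -[e * a *+ N]mulr_natr mulrAC eps_mulN // mul1r; congr (_ + _).
by apply: eq_bigr => i _; rewrite mulrCA.
Qed.

Definition sigma0 i := ps0 i * D N u0 i.

Lemma sigma0_step k : sigma0 (k + 1) - sigma0 k = - (e * f (k + 1)).
Proof. exact: (weak_solution_flux N_gt0 fP psi0_periodic u0_sol k). Qed.

Lemma sigma0_incr k : `|sigma0 (k + 1) - sigma0 k| <= e * `|f (k + 1)|.
Proof. by rewrite sigma0_step normrN normrM (gtr0_norm e_gt0). Qed.

Lemma Du0E i : D N u0 i = sigma0 i / ps0 i.
Proof. by rewrite /sigma0 mulrAC mulfV ?mul1r // gt_eqF ?psi0_gt0. Qed.

Lemma sigma0_bounded i : `|sigma0 i| <= L1.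
Proof.
have u0P := proj1 u0_sol.
rewrite L1normE; apply: (normr_le_periodic_zero_wsum (s := sigma0) (w := fun i => (ps0 i)^-1)
  (b := fun i => e * `|f i|) N_gt0).
- by move=> k; rewrite /sigma0 psi0_periodic (D_periodic u0P).
- by move=> k; rewrite fP.
- by move=> k; rewrite invr_gt0 psi0_gt0.
- by move=> k; rewrite mulr_ge0 // ltW // e_gt0.
- by rewrite -[RHS](sum_D_periodic u0P); apply: eq_bigr => k _; rewrite Du0E.
- exact: sigma0_incr.
Qed.

(* Both fluxes obey the same conservation law, so they differ by a constant. *)
Definition delta := osc psi 0 * D N u 0 - sigma0 0.

Lemma flux_atomistic k : osc psi k * D N u k = sigma0 k + delta.
Proof.
rewrite /delta; have /= <- := @shift1_invariant_const _ (fun k => osc psi k * D N u k - sigma0 k) _ k.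
  by rewrite addrC subrK.
move=> b /=; have := sigma0_step b.
have := weak_solution_flux N_gt0 fP psi_periodic_diag u_sol b; lra.
Qed.

Lemma delta_mul_sum_invpsi : delta * \sum_(1 <= i < N.+1) (psi i%:Z i%:Z)^-1
  = \sum_(1 <= i < N.+1) sigma0 i%:Z * ((ps0 i%:Z)^-1 - (psi i%:Z i%:Z)^-1).
Proof.
have DuE k : D N u k = (sigma0 k + delta) / psi k k.
  by rewrite -flux_atomistic /osc mulrAC mulfV ?mul1r // gt_eqF ?psi_gt0.
apply/eqP; rewrite -subr_eq0 mulr_sumr -sumrB.
rewrite (_ : \sum_(_ <= _ < _) _ = \sum_(1 <= i < N.+1) (D N u i%:Z - D N u0 i%:Z)).
  by rewrite sumrB !sum_D_periodic ?subrr //; [case: u0_sol | case: u_sol].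
apply: eq_bigr => i _; rewrite DuE Du0E.
by field; rewrite !gt_eqF ?psi_gt0 ?psi0_gt0.
Qed.

Lemma normr_invpsi0_sub_invpsi_le i j : `|(ps0 i)^-1 - (psi i j)^-1| <= c^-1.
Proof.
have C_inv_gt0 : 0 < C^-1 by rewrite invr_gt0 C_gt0.
case/andP: (invpsi0_bounded i); case/andP: (invpsi_bounded i j) => *.
by rewrite ler_norml; apply/andP; split; lra.
Qed.

Lemma dist_invpsi0_sub_invpsi i j :
  `|((ps0 (i + 1))^-1 - (psi (i + 1) j)^-1) - ((ps0 i)^-1 - (psi i j)^-1)|
    <= e * (2 * (C' / c ^+ 2)).
Proof.
rewrite (_ : _ - _ = ((ps0 (i + 1))^-1 - (ps0 i)^-1) - ((psi (i + 1) j)^-1 - (psi i j)^-1)).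
  apply: le_trans (ler_normB _ _) _.
  by have := dist_invpsi0 i; have := dist_invpsi i j; lra.
by ring.
Qed.

Lemma normr_sum_sigma0_invpsi_le :
  `|\sum_(1 <= i < N.+1) sigma0 i%:Z * ((ps0 i%:Z)^-1 - (psi i%:Z i%:Z)^-1)|
    <= (L1 * (2 * (C' / c ^+ 2)) + c^-1 * L1) *+ p.
Proof.
pose b i := e * (L1 * (2 * (C' / c ^+ 2)) + c^-1 * `|f i|).
rewrite -sum_eps_affine.
apply: (@normr_sum_diag_le _ N p (fun i j => sigma0 i * ((ps0 i)^-1 - (psi i j)^-1)) b p_dvd_N)
  => [i|l|i j].
- apply: mulr_ge0 (ltW e_gt0) (addr_ge0 (mulr_ge0 L1_ge0 _) (mulr_ge0 invc_ge0 (normr_ge0 _))).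
  exact: mulr_ge0 (ler0n R 2) C'_c2_ge0.
- set a := (l * p)%N%:Z.
  have psi_row : periodic p (fun j => (psi a j)^-1) by move=> j; case: (psiP a j) => _ ->.
  rewrite -mulr_sumr sumrB sumr_const card_ord (sum_periodic_window psi_row a) invpsi0E /avgY.
  rewrite -[_ *+ p]mulr_natr [_ * _ * p%:R]mulrAC mulVf ?mul1r ?subrr ?mulr0 //.
  by rewrite pnatr_eq0 -lt0n.
- apply: le_trans (ler_dist_prod (x := sigma0) (y := fun i j => (ps0 i)^-1 - (psi i j)^-1)
    (dx := fun i => e * `|f i|) (dy := fun=> e * (2 * (C' / c ^+ 2))) sigma0_bounded
    normr_invpsi0_sub_invpsi_le sigma0_incr dist_invpsi0_sub_invpsi i j) _.
  by rewrite le_eqVlt /b; apply/orP; left; apply/eqP; ring.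
Qed.

Definition delta_const : R := (C * (2 * (C' / c ^+ 2) + c^-1)) *+ p.

Lemma delta_bounded : `|delta| <= e * delta_const * L1.
Proof.
set S := \sum_(1 <= i < N.+1) (psi i%:Z i%:Z)^-1.
have S_ge : (e * C)^-1 <= S.
  have -> : (e * C)^-1 = \sum_(1 <= i < N.+1) C^-1.
    by rewrite sumr_const_nat subSS subn0 invfM /eps invrK -[C^-1 *+ N]mulr_natr mulrC.
  by rewrite /S; apply: ler_sum_nat => i _; case/andP: (invpsi_bounded i%:Z i%:Z).
have eC_gt0 : 0 < (e * C)^-1 by rewrite invr_gt0 mulr_gt0 ?e_gt0 ?C_gt0.
have S_gt0 := lt_le_trans eC_gt0 S_ge.
rewrite -(ler_pM2r eC_gt0); apply: le_trans (ler_wpM2l (normr_ge0 _) S_ge) _.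
rewrite -(gtr0_norm S_gt0) -normrM delta_mul_sum_invpsi.
apply: le_trans normr_sum_sigma0_invpsi_le _.
rewrite [X in _ <= X](_ : _ = (L1 * (2 * (C' / c ^+ 2)) + c^-1 * L1) *+ p) //.
rewrite /delta_const -[(C * _) *+ p]mulr_natr -[(L1 * _ + _) *+ p]mulr_natr.
by field; rewrite (gt_eqF c_gt0) (gt_eqF C_gt0) (gt_eqF e_gt0).
Qed.

Lemma normr_invpsi0_le i : `|(ps0 i)^-1| <= c^-1.
Proof. by rewrite invpsi0E; apply: normr_avgY_le => // j; apply: normr_invpsi_le. Qed.

Lemma Du0_bounded i : `|D N u0 i| <= L1 * c^-1.
Proof.
rewrite Du0E normrM; apply: ler_pM; rewrite ?normr_ge0 //.
  exact: sigma0_bounded.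
exact: normr_invpsi0_le.
Qed.

Lemma dist_Du0 i :
  `|D N u0 (i + 1) - D N u0 i| <= e * `|f (i + 1)| * c^-1 + L1 * (e * (C' / c ^+ 2)).
Proof.
rewrite !Du0E; exact: (ler_dist_prod (y := fun i _ => (ps0 i)^-1)
  (dx := fun i => e * `|f i|) (dy := fun=> e * (C' / c ^+ 2)) sigma0_bounded
  (fun i _ => normr_invpsi0_le i) sigma0_incr (fun i _ => dist_invpsi0 i) i 0).
Qed.

Definition Du0chi_const : R := C' / c ^+ 2 * chi_max + c^-1 * chi_lip.

Lemma dist_Du0_chi i j : `|D N u0 (i + 1) * chi (i + 1) j - D N u0 i * chi i j|
  <= e * (L1 * Du0chi_const + c^-1 * chi_max * `|f (i + 1)|).
Proof.
apply: le_trans (ler_dist_prod (x := D N u0) (y := chi)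
  (dx := fun i => e * `|f i| * c^-1 + L1 * (e * (C' / c ^+ 2))) (dy := fun=> e * chi_lip)
  Du0_bounded chi_bounded dist_Du0 dist_chi i j) _.
by rewrite le_eqVlt /Du0chi_const; apply/orP; left; apply/eqP; ring.
Qed.

Lemma D_corrector_sub_u i : D N (fun i => corrector N chi u0 i - u i) i
  = (D N u0 (i + 1) * chi (i + 1) (i + 1) - D N u0 i * chi i (i + 1)) - delta / psi i i.
Proof.
have DuE : D N u i = (sigma0 i + delta) / psi i i.
  by rewrite -flux_atomistic /osc mulrAC mulfV ?mul1r // gt_eqF ?psi_gt0.
transitivity (D N u0 i + chi (i + 1) (i + 1) * D N u0 (i + 1) - chi i i * D N u0 i - D N u i).
  by rewrite /corrector /D; field; rewrite gt_eqF ?e_gt0.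
have -> : chi i i = chi i (i + 1) - (ps0 i / psi i i - 1) by rewrite -chi_DY; ring.
by rewrite DuE /sigma0; field; rewrite gt_eqF ?psi_gt0.
Qed.

Lemma normr_D_corrector_sub_u_le i : `|D N (fun i => corrector N chi u0 i - u i) i|
  <= e * (L1 * (delta_const / c + Du0chi_const)) + e * (c^-1 * chi_max) * `|f (i + 1)|.
Proof.
rewrite D_corrector_sub_u; apply: le_trans (ler_normB _ _) _.
have := dist_Du0_chi i (i + 1).
have : `|delta / psi i i| <= e * delta_const * L1 * c^-1.
  rewrite normrM; apply: ler_pM; rewrite ?normr_ge0 //.
    exact: delta_bounded.
  exact: normr_invpsi_le.
lra.
Qed.

Lemma chi_lip_ge0 : 0 <= chi_lip.
Proof. by have := le_trans (normr_ge0 _) (dist_chi 0 0); rewrite pmulr_rge0 // e_gt0. Qed.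

Lemma Du0chi_const_ge0 : 0 <= Du0chi_const.
Proof.
exact: addr_ge0 (mulr_ge0 C'_c2_ge0 chi_max_ge0) (mulr_ge0 invc_ge0 chi_lip_ge0).
Qed.

Lemma delta_const_ge0 : 0 <= delta_const.
Proof.
apply/mulrn_wge0/mulr_ge0; first exact: ltW C_gt0.
exact: addr_ge0 (mulr_ge0 (ler0n R 2) C'_c2_ge0) invc_ge0.
Qed.

Definition H1_error_const : R := 2 * (delta_const / c + Du0chi_const + c^-1 * chi_max).

Lemma H1_error_bound :
  H1semi N (fun i => corrector N chi u0 i - u i) <= e * H1_error_const * L2norm N f.
Proof.
set K := delta_const / c + Du0chi_const.
have K_ge0 : 0 <= K := addr_ge0 (mulr_ge0 delta_const_ge0 invc_ge0) Du0chi_const_ge0.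
have eK_ge0 : 0 <= e * K := mulr_ge0 (ltW e_gt0) K_ge0.
have B_ge0 : 0 <= e * (c^-1 * chi_max) := mulr_ge0 (ltW e_gt0) (mulr_ge0 invc_ge0 chi_max_ge0).
have A_ge0 : 0 <= e * (L1 * K) by rewrite mulrCA mulr_ge0 ?L1_ge0.
apply: le_trans (L2norm_le_pointwise N_gt0 fP A_ge0 B_ge0 normr_D_corrector_sub_u_le) _.
have := ler_wpM2l eK_ge0 (L1norm_le_L2norm N_gt0 f).
by rewrite /H1_error_const -/K; lra.
Qed.

Lemma avgX_corrector :
  avgX N (corrector N chi u0) = e ^+ 2 * \sum_(1 <= i < N.+1) D N u0 i%:Z * chi i%:Z i%:Z.
Proof.
rewrite /corrector avgXD (proj1 (proj2 u0_sol)) add0r /avgX expr2 -mulrA mulr_sumr.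
by congr (_ * _); apply: eq_bigr => i _; ring.
Qed.

Definition mean_error_const : R := (Du0chi_const + c^-1 * chi_max) *+ p.

Lemma corrector_mean_bound :
  `|avgX N (corrector N chi u0)| <= e ^+ 2 * mean_error_const * L2norm N f.
Proof.
have e2_ge0 : 0 <= e ^+ 2 := exprn_ge0 2 (ltW e_gt0).
rewrite avgX_corrector normrM (ger0_norm e2_ge0) -mulrA.
apply: ler_wpM2l; first exact: e2_ge0.
pose b i := e * (L1 * Du0chi_const + c^-1 * chi_max * `|f i|).
have b_ge0 i : 0 <= b i.
  apply: mulr_ge0 (ltW e_gt0) (addr_ge0 (mulr_ge0 L1_ge0 Du0chi_const_ge0) _).
  exact: mulr_ge0 (mulr_ge0 invc_ge0 chi_max_ge0) (normr_ge0 _).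
have window l : \sum_(k < p) D N u0 (l * p)%N%:Z * chi (l * p)%N%:Z ((l * p)%N%:Z + k.+1%:Z) = 0.
  by rewrite -mulr_sumr (sum_periodic_window (chi_row_periodic _)) chi_row_sum mulr0.
apply: le_trans (normr_sum_diag_le (b := b) p_dvd_N b_ge0 window dist_Du0_chi) _.
rewrite sum_eps_affine /mean_error_const mulrnAl; apply: ler_wMn2r.
have := ler_wpM2l (addr_ge0 Du0chi_const_ge0 (mulr_ge0 invc_ge0 chi_max_ge0))
  (L1norm_le_L2norm N_gt0 f).
lra.
Qed.

End Homogenization.

Theorem theorem4p5 (R : realType) (p : nat) (c_psi C_psi C'_psi : R) :
  (0 < p)%N ->
  exists C1 C2 : R,
  forall (N : nat) (psi chi : int -> int -> R) (f u u0 : int -> R),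
    (0 < N)%N -> (p %| N)%N ->
    two_scale N p psi ->
    A1 psi c_psi C_psi ->
    A2 N p psi C'_psi ->
    cell_solution N p psi chi ->
    periodic N f -> avgX N f = 0 ->
    weak_solution N (osc psi) f u ->
    weak_solution N (psi0 p psi) f u0 ->
    H1semi N (fun i => corrector N chi u0 i - u i)
      <= eps N * C1 * L2norm N f /\
    `| avgX N (corrector N chi u0) | <= eps N ^+ 2 * C2 * L2norm N f.
Proof.
move=> p_gt0.
exists (H1_error_const p c_psi C_psi C'_psi), (mean_error_const p c_psi C_psi C'_psi).
move=> N psi chi f u u0 N_gt0 p_dvd_N psiP psi_A1 psi_A2 chi_cell fP _ u_sol u0_sol.
by split; [apply: H1_error_bound | apply: corrector_mean_bound].
Qed.
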